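(* Let $\mathcal{C}$ be a graph class that is locally almost near-covered with respect to functions $k,m:\mathbb{N}\to\mathbb{N}$, and set $t:=m(2)\cdot k(2)+m(2)+1$. Then no graph in $\mathcal{C}$ contains a half-graph of order $t$ as a semi-induced subgraph.
   Context: $N^G(v)$ is the set of neighbors of $v$; $N_r^G(v)$ is the closed $r$-neighborhood of $v$ (vertices at distance at most $r$, including $v$). Two vertices are $k$-near-twins in $G$ if $|N^G(u)\,\Delta\,N^G(v)|\le k$. $G$ is $(k,m)$-near-covered if every set of vertices that are pairwise not $k$-near-twins has size at most $m$. $\mathcal{C}$ is locally almost near-covered with respect to $k,m$ if for every $r$, every $G\in\mathcal{C}$ and every $v\in V(G)$, the induced subgraph $G[N_r^G(v)]$ is $(k(r),m(r))$-near-covered. $G$ contains a half-graph of order $t$ as a semi-induced subgraph if there are distinct vertices $u_1,\dots,u_t,w_1,\dots,w_t$ of $G$ with $u_iw_j\in E(G)$ iff $i\le j$ (other edges arbitrary). *)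

From mathcomp Require Import all_boot.
Set Implicit Arguments. Unset Strict Implicit. Unset Printing Implicit Defensive.

Definition simple_graph (T : finType) (e : rel T) : Prop :=
  symmetric e /\ irreflexive e.

Definition graph_class := forall T : finType, rel T -> Prop.

(* Neighbourhood of v in the induced subgraph G[S]: N^{G[S]}(v) = N^G(v) ∩ S *)
Definition nbr_in (T : finType) (e : rel T) (S : {set T}) (v : T) : {set T} :=
  [set u in S | e v u].

Definition near_twins_in (T : finType) (e : rel T) (S : {set T}) (k : nat)
  (u v : T) : bool :=
  #|(nbr_in e S u :\: nbr_in e S v) :|: (nbr_in e S v :\: nbr_in e S u)| <= k.

Definition near_covered_in (T : finType) (e : rel T) (S : {set T})
  (k m : nat) : Prop :=
  forall X : {set T}, X \subset S ->
    (forall u v, u \in X -> v \in X -> u != v -> ~~ near_twins_in e S k u v) ->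
    #|X| <= m.

Fixpoint ball (T : finType) (e : rel T) (r : nat) (v : T) : {set T} :=
  match r with
  | 0 => [set v]
  | r'.+1 => ball e r' v :|: [set u | [exists w in ball e r' v, e w u]]
  end.

Definition locally_almost_near_covered (C : graph_class) (k m : nat -> nat)
  : Prop :=
  forall (r : nat) (T : finType) (e : rel T), C T e ->
    forall v : T, near_covered_in e (ball e r v) (k r) (m r).

(* G contains a half-graph of order t as a semi-induced subgraph:
   distinct vertices u_1..u_t, w_1..w_t with u_i w_j in E iff i <= j
   (indices taken in 'I_t, i.e. 0..t-1). *)
Definition has_semi_induced_half_graph (T : finType) (e : rel T) (t : nat)
  : Prop :=
  exists (u w : 'I_t -> T),
    [/\ injective u, injective w,
        (forall i j, u i != w j) &
        (forall i j, e (u i) (w j) = (i <= j)%N)].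

From mathcomp Require Import all_boot.
From mathcomp Require Import zify.

Set Implicit Arguments.
Unset Strict Implicit.
Unset Printing Implicit Defensive.

(* For a < b, the vertices w_a, ..., w_(b-1) are adjacent to u_a but not to
   u_b, so u_a and u_b are not (b - a - 1)-near-twins.  Hence the
   m + 1 vertices u_0, u_(k+1), ..., u_(m(k+1)) are pairwise not k-near-twins.
   All u_i are neighbours of the last w, and every w_j is a neighbour of u_j,
   so the whole half-graph lies in the 2-ball around the last w; there
   near-coveredness bounds such a family by m, forcing t <= m (k + 1). *)

Lemma ball_subS (T : finType) (e : rel T) (r : nat) (v : T) :
  ball e r v \subset ball e r.+1 v.
Proof. exact: subsetUl. Qed.

Lemma mem_ballS (T : finType) (e : rel T) (r : nat) (v x y : T) :
  x \in ball e r v -> e x y -> y \in ball e r.+1 v.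
Proof.
move=> xB exy; rewrite /= in_setU inE; apply/orP; right.
by apply/existsP; exists x; rewrite xB.
Qed.

Lemma near_twins_inC (T : finType) (e : rel T) (S : {set T}) (k : nat)
  (x y : T) :
  near_twins_in e S k x y = near_twins_in e S k y x.
Proof. by rewrite /near_twins_in setUC. Qed.

Section HalfGraph.

Variables (T : finType) (e : rel T) (t : nat) (u w : 'I_t -> T).
Hypothesis w_inj : injective w.
Hypothesis half_graph_adj : forall i j, e (u i) (w j) = (i <= j).

Section HalfGraphInSet.

Variable S : {set T}.
Hypothesis w_in_S : forall j, w j \in S.

Lemma half_graph_nbr_gap (a b : 'I_t) :
  a <= b -> b - a <= #|nbr_in e S (u a) :\: nbr_in e S (u b)|.
Proof.
move=> le_ab.
have shiftP (j : 'I_(b - a)) : a + j < t.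
  by have := ltn_ord j; have := ltn_ord b; lia.
pose shift j := Ordinal (shiftP j).
have shift_inj : injective shift.
  by move=> x y /(congr1 val) /= ?; apply: val_inj => /=; lia.
rewrite -[X in X <= _]card_ord -(card_imset _ (inj_comp w_inj shift_inj)).
apply/subset_leq_card/subsetP => _ /imsetP [j _ ->].
rewrite !inE w_in_S !half_graph_adj /= -ltnNge.
by have := ltn_ord j; lia.
Qed.

Lemma half_graph_not_near_twins (k : nat) (a b : 'I_t) :
  a + k < b -> ~~ near_twins_in e S k (u a) (u b).
Proof.
move=> lt_akb; rewrite /near_twins_in -ltnNge.
apply: leq_trans (subset_leq_card (subsetUl _ _)).
have := @half_graph_nbr_gap a b; lia.
Qed.

Hypothesis u_inj : injective u.
Hypothesis u_in_S : forall i, u i \in S.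

Lemma half_graph_order_bound (k n : nat) :
  near_covered_in e S k n -> t <= n * k.+1.
Proof.
move=> covered; rewrite leqNgt; apply/negP => lt_nt.
have spreadP (i : 'I_n.+1) : i * k.+1 < t.
  by apply: leq_ltn_trans lt_nt; rewrite leq_mul2r -ltnS ltn_ord orbT.
pose spread i := Ordinal (spreadP i).
have spread_inj : injective spread.
  move=> i j /(congr1 val) /= /eqP; rewrite eqn_pmul2r // => /eqP.
  exact: val_inj.
have spread_gap (i j : 'I_n.+1) : i < j -> spread i + k < spread j.
  move=> lt_ij /=; have : i.+1 * k.+1 <= j * k.+1 by rewrite leq_mul2r lt_ij.
  rewrite mulSn; lia.
have := covered [set u (spread i) | i : 'I_n.+1].
rewrite card_imset ?card_ord ?ltnn; last exact: inj_comp.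
move=> bound; suff : false by []; apply: bound.
  by apply/subsetP => _ /imsetP [i _ ->].
move=> _ _ /imsetP [i _ ->] /imsetP [j _ ->].
wlog lt_ij : i j / i < j => [hwlog neq_ij|_].
  case: (ltngtP i j) => [lt_ij | lt_ji | /val_inj eq_ij]; first exact: hwlog.
  - by rewrite near_twins_inC hwlog // eq_sym.
  - by rewrite eq_ij eqxx in neq_ij.
exact/half_graph_not_near_twins/spread_gap.
Qed.

End HalfGraphInSet.

Hypothesis e_sym : symmetric e.
Variable jmax : 'I_t.
Hypothesis jmax_max : forall i : 'I_t, i <= jmax.

Lemma half_graph_u_in_ball1 (i : 'I_t) : u i \in ball e 1 (w jmax).
Proof.
apply: (@mem_ballS _ _ 0 (w jmax) (w jmax)); first exact: set11.
by rewrite e_sym half_graph_adj.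
Qed.

Lemma half_graph_w_in_ball2 (j : 'I_t) : w j \in ball e 2 (w jmax).
Proof.
by apply: (mem_ballS (half_graph_u_in_ball1 j)); rewrite half_graph_adj.
Qed.

Lemma half_graph_u_in_ball2 (i : 'I_t) : u i \in ball e 2 (w jmax).
Proof. exact/(subsetP (ball_subS _ _ _))/half_graph_u_in_ball1. Qed.

End HalfGraph.

Theorem lemma5p12 (C : graph_class) (k m : nat -> nat) :
  locally_almost_near_covered C k m ->
  forall (T : finType) (e : rel T), simple_graph e -> C T e ->
    ~ has_semi_induced_half_graph e (m 2 * k 2 + m 2 + 1).
Proof.
move=> covered T e [e_sym _] CTe [u [w [u_inj w_inj _ adj]]].
have jmaxP : m 2 * k 2 + m 2 < m 2 * k 2 + m 2 + 1 by rewrite addn1.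
pose jmax := Ordinal jmaxP.
have jmax_max (i : 'I_(m 2 * k 2 + m 2 + 1)) : i <= jmax.
  by rewrite -ltnS -[jmax.+1]addn1.
have w_in_ball := half_graph_w_in_ball2 adj e_sym jmax_max.
have u_in_ball := half_graph_u_in_ball2 adj e_sym jmax_max.
have := half_graph_order_bound w_inj adj w_in_ball u_inj u_in_ball
  (covered 2 T e CTe (w jmax)).
by rewrite mulnSr addn1 ltnn.
Qed.
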